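(* Consider a fair division instance with $n$ agents, $m$ divisible goods, additive valuations $v_i(g)$ and generalized assignment constraints with sizes $s_{i,g}$ and budgets $B_i$. Let $\gamma>0$ satisfy: (1) $\gamma\le 1/2$; (2) $\gamma<\min_{i,h\in[n],g\in[m]} v_i(g)/v_h(g)$; (3) if the set $\{(i,h,g,g'):\rho_i(g')>\rho_i(g)\}$ is nonempty, then $\gamma<\frac12\min_{i,h\in[n],\,g,g'\in[m],\,\rho_i(g')>\rho_i(g)}\frac{v_i(g')-v_i(g)\,s_{i,g'}/s_{i,g}}{v_h(g')}$. Let $w\in\mathbb{R}_+^n$ have all components positive and let $x=(x_1,\dots,x_n)$ be a feasible allocation maximizing $\sum_{i=1}^n w_i v_i(x_i)$ over all feasible allocations. If $i,h\in[n]$ are agents with $w_h\le\gamma w_i$, then agent $i$ does not envy agent $h$ under $x$.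
   Context: An allocation is $x=(x_1,\dots,x_n)$ with $x_i\in[0,1]^m$ and $\sum_i x_{i,g}\le1$ for each good $g$. Additive valuations: $v_i(y)=\sum_g y_g v_i(g)$ with $v_i(g)\ge0$ the value of the whole good $g$ to $i$. Generalized assignment constraints: bundle $y$ is feasible for $i$ iff $\sum_g s_{i,g}y_g\le B_i$; an allocation is feasible if each $x_i$ is feasible for $i$. The density of good $g$ for agent $i$ is $\rho_i(g)=v_i(g)/s_{i,g}$. Agent $i$ envies agent $h$ in $x$ if some bundle $y\le x_h$ (componentwise) feasible for $i$ has $v_i(y)>v_i(x_i)$. *)

From mathcomp Require Import all_boot all_order all_algebra.
Set Implicit Arguments. Unset Strict Implicit. Unset Printing Implicit Defensive.
Import Order.TTheory GRing.Theory Num.Theory.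
Local Open Scope ring_scope.

Section FairDivision.
Variables (R : realFieldType) (n m : nat).

Definition is_bundle (y : 'I_m -> R) : Prop := forall g, 0 <= y g <= 1.

Definition is_allocation (x : 'I_n -> 'I_m -> R) : Prop :=
  (forall i, is_bundle (x i)) /\ (forall g, \sum_(i < n) x i g <= 1).

Definition value (v : 'I_n -> 'I_m -> R) (i : 'I_n) (y : 'I_m -> R) : R :=
  \sum_(g < m) y g * v i g.

Definition feasible_bundle (s : 'I_n -> 'I_m -> R) (B : 'I_n -> R)
    (i : 'I_n) (y : 'I_m -> R) : Prop :=
  \sum_(g < m) s i g * y g <= B i.

Definition feasible_allocation (s : 'I_n -> 'I_m -> R) (B : 'I_n -> R)
    (x : 'I_n -> 'I_m -> R) : Prop :=
  is_allocation x /\ (forall i, feasible_bundle s B i (x i)).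

Definition density (v s : 'I_n -> 'I_m -> R) (i : 'I_n) (g : 'I_m) : R :=
  v i g / s i g.

Definition envies (v s : 'I_n -> 'I_m -> R) (B : 'I_n -> R)
    (x : 'I_n -> 'I_m -> R) (i h : 'I_n) : Prop :=
  exists y : 'I_m -> R,
    is_bundle y /\ (forall g, y g <= x h g) /\ feasible_bundle s B i y /\
    value v i (x i) < value v i y.

End FairDivision.

From mathcomp Require Import all_boot all_order all_algebra.
From mathcomp Require Import ring lra.
Set Implicit Arguments. Unset Strict Implicit. Unset Printing Implicit Defensive.
Import Order.TTheory GRing.Theory Num.Theory.
Local Open Scope ring_scope.

(* If i envied h, a welfare-maximising allocation could be improved by a
   small local exchange.  When i's budget is slack, i takes a little of a good
   that h holds and i wants; this gains because w_h v_h(g) <= gamma w_i v_h(g)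
   < w_i v_i(g).  When i's budget is tight, envy forces i to hold a good g0 of
   lower density than some good g' in the envied bundle (otherwise the
   budget-weighted density bound v_i(y) <= r s_i(y) <= r s_i(x_i) <= v_i(x_i)
   would hold), and swapping g0 for g' at equal size gains by condition (3). *)

Lemma exists_gt0_of_wsum_gt0 (R : numDomainType) (m : nat) (c y : 'I_m -> R) :
  (forall g, 0 <= c g) -> (forall g, 0 <= y g) ->
  0 < \sum_(g < m) y g * c g -> exists g, 0 < y g.
Proof.
move=> c_ge0 y_ge0 /gt_eqF/negbT/eqP.
case/psumr_neq0P => [g _|g /= yc_gt0]; first exact: mulr_ge0.
exists g; rewrite lt_def y_ge0 andbT.
by apply: contraTneq yc_gt0 => ->; rewrite mul0r ltxx.
Qed.

Lemma exists_density_gap (R : realFieldType) (m : nat) (v s y z : 'I_m -> R) :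
  (forall g, 0 <= v g) -> (forall g, 0 < s g) ->
  (forall g, 0 <= y g) -> (forall g, 0 <= z g) ->
  \sum_(g < m) s g * y g <= \sum_(g < m) s g * z g ->
  \sum_(g < m) z g * v g < \sum_(g < m) y g * v g ->
  exists g0 g', [/\ 0 < z g0, 0 < y g' & v g0 / s g0 < v g' / s g'].
Proof.
move=> v_ge0 s_gt0 y_ge0 z_ge0 size_le value_lt.
have value_z_ge0 : 0 <= \sum_(g < m) z g * v g.
  by apply: sumr_ge0 => g _; exact: mulr_ge0.
have [g1 y_g1] :=
  exists_gt0_of_wsum_gt0 v_ge0 y_ge0 (le_lt_trans value_z_ge0 value_lt).
case: (@arg_maxP _ _ _ g1 (fun g => 0 < y g) (fun g => v g / s g) y_g1)
  => g' y_g' g'_max.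
set r := v g' / s g' in g'_max *.
case: (pickP (fun g => (0 < z g) && (v g / s g < r))) => [g0 | no_gap].
  by case/andP => z_g0 lt_r; exists g0, g'.
have r_ge0 : 0 <= r by rewrite divr_ge0 // ltW.
have y_bound : \sum_(g < m) y g * v g <= r * \sum_(g < m) s g * y g.
  rewrite mulr_sumr; apply: ler_sum => g _.
  have -> : r * (s g * y g) = y g * (r * s g) by ring.
  have [y_gt0|y_le0] := ltrP 0 (y g).
    by rewrite ler_wpM2l // -ler_pdivrMr //; exact: g'_max.
  have -> : y g = 0 by apply/le_anti; rewrite y_le0 y_ge0.
  by rewrite !mul0r.
have z_bound : r * \sum_(g < m) s g * z g <= \sum_(g < m) z g * v g.
  rewrite mulr_sumr; apply: ler_sum => g _.
  have -> : r * (s g * z g) = z g * (r * s g) by ring.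
  have [z_gt0|z_le0] := ltrP 0 (z g).
    have /negbT := no_gap g; rewrite /= z_gt0 -leNgt => r_le.
    by rewrite ler_wpM2l // -ler_pdivlMr.
  have -> : z g = 0 by apply/le_anti; rewrite z_le0 z_ge0.
  by rewrite !mul0r.
by have := ler_wpM2l r_ge0 size_le; lra.
Qed.

Lemma weighted_lt_of_ratio_gt (R : realFieldType) (gamma a b wa wb : R) :
  0 < b -> 0 < wa -> wb <= gamma * wa -> gamma < a / b -> wb * b < wa * a.
Proof.
move=> b_gt0 wa_gt0 wb_le; rewrite ltr_pdivlMr // => gamma_lt.
apply: le_lt_trans (ler_wpM2r (ltW b_gt0) wb_le) _.
by rewrite mulrAC mulrC ltr_pM2l.
Qed.

Section Perturbation.
Variables (R : realFieldType) (n m : nat).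
Implicit Types (x : 'I_n -> 'I_m -> R) (v s : 'I_n -> 'I_m -> R)
  (B w : 'I_n -> R).

Definition bump x (a0 : 'I_n) (g0 : 'I_m) (c : R) : 'I_n -> 'I_m -> R :=
  fun a g => x a g + (if (a == a0) && (g == g0) then c else 0).

Definition transfer x (h i : 'I_n) (g : 'I_m) (e : R) :=
  bump (bump x i g e) h g (- e).

Definition welfare v w x := \sum_(a < n) w a * value v a (x a).

Lemma sum_bump_goods x a0 g0 c a (f : 'I_m -> R) :
  \sum_(g < m) bump x a0 g0 c a g * f g
  = \sum_(g < m) x a g * f g + (if a == a0 then c * f g0 else 0).
Proof.
rewrite /bump (eq_bigr _ (fun g _ => mulrDl _ _ _)) big_split /=; congr (_ + _).
case: (a == a0) => /=; last by rewrite big1 // => g _; rewrite mul0r.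
rewrite (eq_bigr (fun g => if g == g0 then c * f g else 0)) => [|g _].
  by rewrite -big_mkcond big_pred1_eq.
by case: (g == g0); rewrite ?mul0r.
Qed.

Lemma sum_bump_agents x a0 g0 c g :
  \sum_(a < n) bump x a0 g0 c a g = \sum_(a < n) x a g + (if g == g0 then c else 0).
Proof.
rewrite /bump big_split /=; congr (_ + _).
case: (g == g0); last by rewrite big1 // => a _; rewrite andbF.
rewrite (eq_bigr (fun a => if a == a0 then c else 0)) => [|a _].
  by rewrite -big_mkcond big_pred1_eq.
by rewrite andbT.
Qed.

Lemma budget_bump s x a0 g0 c a :
  \sum_(g < m) s a g * bump x a0 g0 c a g
  = \sum_(g < m) s a g * x a g + (if a == a0 then s a g0 * c else 0).
Proof.
under eq_bigr do rewrite mulrC.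
rewrite sum_bump_goods; under eq_bigr do rewrite mulrC.
by rewrite mulrC.
Qed.

Lemma welfare_bump v w x a0 g0 c :
  welfare v w (bump x a0 g0 c) = welfare v w x + c * (w a0 * v a0 g0).
Proof.
rewrite /welfare /value.
under eq_bigr do rewrite sum_bump_goods mulrDr.
rewrite big_split /=; congr (_ + _).
rewrite (eq_bigr (fun a => if a == a0 then c * (w a * v a g0) else 0)) => [|a _].
  by rewrite -big_mkcond big_pred1_eq.
by case: (a == a0); rewrite ?mulr0 // mulrCA.
Qed.

Lemma feasible_remove s B x a g d :
  (forall a g, 0 <= s a g) -> feasible_allocation s B x ->
  0 <= d <= x a g -> feasible_allocation s B (bump x a g (- d)).
Proof.
move=> s_ge0 [[x_bundle x_supply] x_budget] /andP[d_ge0 d_le].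
split; [split|].
- move=> b k; rewrite /bump; case: ifP => [/andP[/eqP-> /eqP->]|_].
    by have /andP[? ?] := x_bundle a g; apply/andP; split; lra.
  by rewrite addr0; exact: x_bundle.
- move=> k; rewrite sum_bump_agents; have := x_supply k.
  by case: (k == g) => ?; lra.
- move=> b; rewrite /feasible_bundle budget_bump; have := x_budget b.
  have := mulr_ge0 (s_ge0 a g) d_ge0; rewrite /feasible_bundle.
  by case: eqP => [->|_] ? ?; lra.
Qed.

Lemma feasible_transfer s B x h i g e :
  (forall a g, 0 <= s a g) -> feasible_allocation s B x -> i != h ->
  0 <= e <= x h g -> \sum_(k < m) s i k * x i k + s i g * e <= B i ->
  feasible_allocation s B (transfer x h i g e).
Proof.
move=> s_ge0 [[x_bundle x_supply] x_budget] i_neq_h /andP[e_ge0 e_le] i_budget.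
have x_ge0 a k : 0 <= x a k by case/andP: (x_bundle a k).
have x_ig_le : x i g + e <= 1.
  have pair_le : x i g + x h g <= \sum_(a < n) x a g.
    rewrite (bigD1 i) //= (bigD1 h) 1?eq_sym //= addrA lerDl.
    by apply: sumr_ge0 => a _.
  by have := x_supply g; lra.
split; [split|].
- move=> b k; rewrite /transfer /bump.
  case: (eqVneq b i) => [->|_]; rewrite ?(negbTE i_neq_h) /=.
    case: eqP => [->|_]; last by rewrite !addr0; exact: x_bundle.
    by have := x_ge0 i g; rewrite addr0 => ?; apply/andP; split; lra.
  rewrite addr0 /=.
  case: ifP => [/andP[/eqP-> /eqP->]|_]; last by rewrite addr0; exact: x_bundle.
  by have /andP[? ?] := x_bundle h g; apply/andP; split; lra.
- move=> k; rewrite !sum_bump_agents; have := x_supply k.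
  by case: (k == g) => ?; lra.
- move=> b; rewrite /feasible_bundle !budget_bump; have := x_budget b.
  have := mulr_ge0 (s_ge0 h g) e_ge0; rewrite /feasible_bundle.
  case: (eqVneq b i) => [->|_]; first by rewrite (negbTE i_neq_h) => ? ?; lra.
  by case: eqP => [->|_] ? ?; lra.
Qed.

End Perturbation.

Section OptimalExchange.
Variables (R : realFieldType) (n m : nat).
Variables (v s : 'I_n -> 'I_m -> R) (B w : 'I_n -> R) (x : 'I_n -> 'I_m -> R).
Hypothesis s_gt0 : forall a g, 0 < s a g.
Hypothesis x_feasible : feasible_allocation s B x.
Hypothesis x_optimal : forall x', feasible_allocation s B x' ->
  welfare v w x' <= welfare v w x.

Let s_ge0 a g : 0 <= s a g := ltW (s_gt0 a g).

Lemma optimal_exchange_gain_le i h g' g0 e d :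
  i != h -> 0 <= e <= x h g' -> 0 <= d <= x i g0 ->
  \sum_(k < m) s i k * x i k - s i g0 * d + s i g' * e <= B i ->
  e * (w i * v i g' - w h * v h g') <= d * (w i * v i g0).
Proof.
move=> i_neq_h e_range d_range i_budget.
have removed_feasible := feasible_remove s_ge0 x_feasible d_range.
have e_range' : 0 <= e <= bump x i g0 (- d) h g'.
  by rewrite /bump eq_sym (negbTE i_neq_h) addr0.
have budget' : \sum_(k < m) s i k * bump x i g0 (- d) i k + s i g' * e <= B i.
  by rewrite budget_bump eqxx; lra.
have := x_optimal
  (feasible_transfer s_ge0 removed_feasible i_neq_h e_range' budget').
by rewrite /transfer !welfare_bump; lra.
Qed.

Lemma optimal_slack_le i h g :
  i != h -> \sum_(k < m) s i k * x i k < B i -> 0 < x h g ->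
  w i * v i g <= w h * v h g.
Proof.
move=> i_neq_h slack x_hg.
set S := \sum_(k < m) s i k * x i k in slack *.
pose e := Order.min (x h g) ((B i - S) / s i g).
have e_gt0 : 0 < e by rewrite lt_min x_hg divr_gt0 ?subr_gt0.
have e_le_x : e <= x h g by rewrite ge_min lexx.
have e_budget : e * s i g <= B i - S by rewrite -ler_pdivlMr // ge_min lexx orbT.
have e_range : 0 <= e <= x h g by rewrite (ltW e_gt0) e_le_x.
have d_range : 0 <= (0 : R) <= x i g.
  by case/andP: (x_feasible.1.1 i g) => -> _; rewrite lexx.
have budget : S - s i g * 0 + s i g * e <= B i by lra.
have := optimal_exchange_gain_le i_neq_h e_range d_range budget.
by rewrite mul0r pmulr_rle0 // subr_le0.
Qed.

Lemma optimal_swap_le i h g0 g' :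
  i != h -> 0 < x i g0 -> 0 < x h g' ->
  w i * (v i g' - v i g0 * s i g' / s i g0) <= w h * v h g'.
Proof.
move=> i_neq_h x_ig0 x_hg'.
have s0 := s_gt0 i g0; have s' := s_gt0 i g'.
pose e := Order.min (x h g') (x i g0 * s i g0 / s i g').
pose d := e * s i g' / s i g0.
have e_gt0 : 0 < e.
  by rewrite lt_min x_hg' /=; apply: divr_gt0 => //; exact: mulr_gt0.
have e_le_x : e <= x h g' by rewrite ge_min lexx.
have d_le_x : d <= x i g0.
  by rewrite ler_pdivrMr // -ler_pdivlMr // ge_min lexx orbT.
have d_gt0 : 0 < d by apply: divr_gt0 => //; exact: mulr_gt0.
have same_size : s i g0 * d = s i g' * e by rewrite /d; field; rewrite gt_eqF.
have e_range : 0 <= e <= x h g' by rewrite (ltW e_gt0) e_le_x.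
have d_range : 0 <= d <= x i g0 by rewrite (ltW d_gt0) d_le_x.
have budget : \sum_(k < m) s i k * x i k - s i g0 * d + s i g' * e <= B i.
  by rewrite same_size subrK; exact: x_feasible.2.
have := optimal_exchange_gain_le i_neq_h e_range d_range budget.
have -> : d * (w i * v i g0) = e * (w i * (v i g0 * s i g' / s i g0)).
  by rewrite /d; ring.
by rewrite -subr_ge0 -mulrBr pmulr_rge0 // => ?; lra.
Qed.

End OptimalExchange.

Theorem lemma3 (R : realFieldType) (n m : nat)
    (v s : 'I_n -> 'I_m -> R) (B : 'I_n -> R) (gamma : R)
    (w : 'I_n -> R) (x : 'I_n -> 'I_m -> R) (i h : 'I_n) :
  (forall a g, 0 < v a g) ->
  (forall a g, 0 < s a g) ->
  0 < gamma ->
  gamma <= 1 / 2 ->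
  (forall a b g, gamma < v a g / v b g) ->
  (forall a b g g', density v s a g < density v s a g' ->
     gamma < 1 / 2 * ((v a g' - v a g * s a g' / s a g) / v b g')) ->
  (forall a, 0 < w a) ->
  feasible_allocation s B x ->
  (forall x', feasible_allocation s B x' ->
     \sum_(a < n) w a * value v a (x' a) <= \sum_(a < n) w a * value v a (x a)) ->
  w h <= gamma * w i ->
  ~ envies v s B x i h.
Proof.
move=> v_gt0 s_gt0 gamma_gt0 gamma_le_half gamma_lt_ratio gamma_lt_gain w_gt0
  x_feasible x_optimal w_hi [y [y_bundle [y_le [y_budget y_better]]]].
have i_neq_h : i != h.
  by apply/eqP => i_eq_h; move: w_hi; rewrite i_eq_h; have := w_gt0 h; nra.
have v_ge0 a g : 0 <= v a g := ltW (v_gt0 a g).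
have y_ge0 g : 0 <= y g by case/andP: (y_bundle g).
have x_ge0 g : 0 <= x i g by case/andP: (x_feasible.1.1 i g).
have h_holds g : 0 < y g -> 0 < x h g := fun y_g => lt_le_trans y_g (y_le g).
case: (ltrP (\sum_(k < m) s i k * x i k) (B i)) => [slack | tight].
  have value_x_ge0 : 0 <= value v i (x i).
    by apply: sumr_ge0 => g _; exact: mulr_ge0.
  have [g y_g] :=
    exists_gt0_of_wsum_gt0 (v_ge0 i) y_ge0 (le_lt_trans value_x_ge0 y_better).
  have := optimal_slack_le s_gt0 x_feasible x_optimal i_neq_h slack (h_holds g y_g).
  by rewrite leNgt (weighted_lt_of_ratio_gt (v_gt0 h g) (w_gt0 i) w_hi
    (gamma_lt_ratio i h g)).
have [g0 [g' [x_g0 y_g' gap]]] := exists_density_gap (v_ge0 i) (s_gt0 i)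
  y_ge0 x_ge0 (le_trans y_budget tight) y_better.
have gamma_lt_swap_ratio :
    gamma < (v i g' - v i g0 * s i g' / s i g0) / v h g'.
  by have := gamma_lt_gain i h g0 g' gap; lra.
have := optimal_swap_le s_gt0 x_feasible x_optimal i_neq_h x_g0 (h_holds g' y_g').
by rewrite leNgt (weighted_lt_of_ratio_gt (v_gt0 h g') (w_gt0 i) w_hi
  gamma_lt_swap_ratio).
Qed.
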